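(* In the setting of the context, let $U>0$, $H=H_{\mathrm{hop}}+H_{\mathrm{int}}$ with $H_{\mathrm{int}}=U\sum_{v\in\mathcal{V}_L}n_{v,\uparrow}n_{v,\downarrow}$, and let the electron number be $N_e=|\mathcal{V}_L|-L$. Then the ferromagnetic state $\Phi_\uparrow=\big(\prod_{v\in\mathcal{V}_L^W}a^\dagger_{v,\uparrow}\big)\Phi_0$, in which every single-electron ground state of $H_{\mathrm{hop}}$ is occupied by one $\uparrow$-spin electron (total $S^{(3)}$ eigenvalue $N_e/2$), is a ground state of $H$, with energy $0$.
   Context: Construction. Let $G_l=(V_l,E_l)$, $l=1,\dots,L$, be complete graphs with $|V_l|\ge 2$. In each $V_l$ one vertex $v_l^0$ is painted black, the others white. Set $\mathcal{G}_1=G_1$. For $l=2,\dots,L$: choose an integer $z_l$ with $0<z_l\le |V_l|-1$, choose $z_l$ white vertices of $V_l$ and identify each with a vertex (black or white; distinct with distinct) of $\mathcal{V}_{l-1}$; $\mathcal{V}_l=\mathcal{V}_{l-1}\cup V_l$ with these identifications and $\mathcal{E}_l=\mathcal{E}_{l-1}\cup E_l$ (edges joining the same two vertices merged). A white vertex identified with a black one becomes black; two identified white vertices stay white; $v_l^0$ is never identified with an earlier vertex. The black vertices of $\mathcal{G}_L$ are exactly $v_1^0,\dots,v_L^0$; $\mathcal{V}_L^W$ is the set of white vertices; $V_l$ is regarded as a subset of $\mathcal{V}_L$. Weights: $w(v)=\#\{l: v\in V_l\}$, $w(e)=\#\{l: e\in E_l\}$. Directed edges $\vec{\mathcal{E}}_L=\bigcup_l\{(v,v_l^0):v\in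 V_l\setminus\{v_l^0\}\}$; directed paths, reachable set $R(v)$ (containing $v$ via the trivial path), and number $N(v\to u)$ of directed paths from $v$ to $u$ defined as usual; $|(v\to u)_j|$ is the number of vertices on the $j$-th path. Fermions $c_{v,\sigma}$ on $\mathcal{V}_L$ with canonical anticommutation relations, vacuum $\Phi_0$, $n_{v,\sigma}=c^\dagger_{v,\sigma}c_{v,\sigma}$. $H_{\mathrm{hop}}=\sum_{v,v'}\sum_\sigma t_{v,v'}c^\dagger_{v,\sigma}c_{v',\sigma}$ with $t_{v,v'}=w(e)t$ for $e=\{v,v'\}\in\mathcal{E}_L$, $t_{v,v}=w(v)t$, $0$ otherwise, $t>0$. For white $v$, $a_{v,\sigma}=\sum_{u\in R(v)}\big(\sum_{j=1}^{N(v\to u)}(-1)^{|(v\to u)_j|-1}\big)c_{u,\sigma}$. *)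

From HB Require Import structures.
From mathcomp Require Import all_boot all_order all_algebra.
Set Implicit Arguments. Unset Strict Implicit. Unset Printing Implicit Defensive.
Import Order.TTheory GRing.Theory Num.Theory.
Local Open Scope ring_scope.

(* The graph G_L.  Vertex set: a finType V.  The L complete graphs     *)
(* G_l are given by their vertex sets Vl l (as subsets of V_L), with   *)
(* black vertex b l = v_l^0.  Indices l : 'I_L, where l = 0 stands for *)
(* the paper's l = 1.                                                  *)

Definition construction (V : finType) (L : nat)
    (Vl : 'I_L -> {set V}) (b : 'I_L -> V) : Prop :=
  (0 < L)%N /\
  [/\
      forall l, (2 <= #|Vl l|)%N,
      forall l, b l \in Vl l,
      forall v, exists l, v \in Vl l,
      forall l k : 'I_L, (k < l)%N -> b l \notin Vl k
    & (* for l >= 2, z_l > 0 vertices of V_l are identified with earlier ones *)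
      forall l : 'I_L, (0 < l)%N ->
        exists k : 'I_L, (k < l)%N /\ (Vl l :&: Vl k != set0)].

Definition white (V : finType) (L : nat) (b : 'I_L -> V) : {set V} :=
  [set v | [forall l, v != b l]].

(* Weight: w(v) = #{l : v in V_l} for v = v', and w({v,v'}) = #{l : e in E_l}
   for v <> v' (since G_l is complete, {v,v'} in E_l iff v, v' in V_l);
   in particular it is 0 when {v,v'} is not an edge of G_L. *)
Definition weight (V : finType) (L : nat) (Vl : 'I_L -> {set V}) (v v' : V) : nat :=
  #|[set l | (v \in Vl l) && (v' \in Vl l)]|.

Definition dedge (V : finType) (L : nat) (Vl : 'I_L -> {set V}) (b : 'I_L -> V) :
    rel V :=
  fun v w => [exists l, [&& w == b l, v \in Vl l & v != b l]].

(* Number of directed paths from v to u having k edges (k+1 vertices). *)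
Definition npaths (V : finType) (L : nat) (Vl : 'I_L -> {set V}) (b : 'I_L -> V)
    (k : nat) (v u : V) : nat :=
  #|[set p : k.-tuple V | path (dedge Vl b) v p && (last v p == u)]|.

(* sum_j (-1)^(|(v -> u)_j| - 1) over all directed paths from v to u.
   The graph is acyclic under [construction], so a path has at most #|V|
   vertices, i.e. fewer than #|V| edges. *)
Definition acoef (C : numClosedFieldType) (V : finType) (L : nat)
    (Vl : 'I_L -> {set V}) (b : 'I_L -> V) (v u : V) : C :=
  \sum_(k < #|V|) (-1) ^+ k * (npaths Vl b k v u)%:R.

(* Fermionic Fock space over the modes (v, sigma), sigma = true for up, *)
(* false for down: functions on the occupation sets (Jordan-Wigner     *)
(* realization of the canonical anticommutation relations).            *)

Definition fock (C : numClosedFieldType) (V : finType) :=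
  {ffun {set (V * bool)} -> C}.

Definition jw (C : numClosedFieldType) (V : finType) (x : V * bool)
    (S : {set V * bool}) : C :=
  (-1) ^+ #|[set y in S | (enum_rank y < enum_rank x)%N]|.

Definition cdag (C : numClosedFieldType) (V : finType) (x : V * bool)
    (psi : fock C V) : fock C V :=
  [ffun S : {set V * bool} => if x \in S then jw C x S * psi (S :\ x) else 0].

Definition cann (C : numClosedFieldType) (V : finType) (x : V * bool)
    (psi : fock C V) : fock C V :=
  [ffun S : {set V * bool} => if x \in S then 0 else jw C x S * psi (x |: S)].

Definition numop (C : numClosedFieldType) (V : finType) (x : V * bool)
    (psi : fock C V) : fock C V := cdag x (cann x psi).

Definition fscale (C : numClosedFieldType) (V : finType) (a : C)
    (psi : fock C V) : fock C V := [ffun S : {set V * bool} => a * psi S].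

Definition vacuum (C : numClosedFieldType) (V : finType) : fock C V :=
  [ffun S : {set V * bool} => (S == set0)%:R].

Definition Hhop (C : numClosedFieldType) (V : finType) (L : nat)
    (Vl : 'I_L -> {set V}) (t : C) (psi : fock C V) : fock C V :=
  \sum_(v : V) \sum_(v' : V) \sum_(s : bool)
     fscale ((weight Vl v v')%:R * t) (cdag (v, s) (cann (v', s) psi)).

Definition Hint (C : numClosedFieldType) (V : finType) (U : C)
    (psi : fock C V) : fock C V :=
  \sum_(v : V) fscale U (numop (v, true) (numop (v, false) psi)).

Definition Hubbard (C : numClosedFieldType) (V : finType) (L : nat)
    (Vl : 'I_L -> {set V}) (t U : C) (psi : fock C V) : fock C V :=
  Hhop Vl t psi + Hint U psi.

Definition adag_up (C : numClosedFieldType) (V : finType) (L : nat)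
    (Vl : 'I_L -> {set V}) (b : 'I_L -> V) (v : V) (psi : fock C V) : fock C V :=
  \sum_(u | connect (dedge Vl b) v u) fscale (acoef C Vl b v u) (cdag (u, true) psi).

Definition Phi_up (C : numClosedFieldType) (V : finType) (L : nat)
    (Vl : 'I_L -> {set V}) (b : 'I_L -> V) : fock C V :=
  foldr (fun v psi => adag_up Vl b v psi) (vacuum C V) (enum (white b)).

Definition n_electron (C : numClosedFieldType) (V : finType) (N : nat)
    (psi : fock C V) : Prop :=
  forall S : {set V * bool}, #|S| != N -> psi S = 0.

From HB Require Import structures.
From mathcomp Require Import all_boot all_order all_algebra.
From mathcomp Require Import ring zify.
Set Implicit Arguments. Unset Strict Implicit. Unset Printing Implicit Defensive.
Import Order.TTheory GRing.Theory Num.Theory.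
Local Open Scope ring_scope.

(* Writing B_{l,s} = sum_{v in V_l} c_{v,s} for the block
       annihilators, the canonical anticommutation relations give
       H_hop = t sum_{l,s} B_{l,s}^dag B_{l,s}, while H_int is U times a sum
       of number operators; both are positive semidefinite for the Fock inner
       product, hence every eigenvalue of H = H_hop + H_int is >= 0.
   (2) The ferromagnetic state.  On the directed graph v -> v_l^0 a potential
       decreases strictly along edges, so the graph is acyclic and the path
       counts defining the coefficients a(w,u) of a^dag_w satisfy the
       recursion a(w,z) = - sum_{u -> z} a(w,u).  Summing it over a block
       gives sum_{u in V_l} a(w,u) = 0 for white w, i.e. B_{l,up} anticommutes
       with every a^dag_w, so B_{l,s} Phi_up = 0 for all l, s.  Phi_up carries
       only up spins, so H_int Phi_up = 0 as well, and its coefficient on the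
       set of white up-modes is nonzero. *)

HB.instance Definition _ (C : numClosedFieldType) (V : finType) :=
  GRing.Lmodule.copy (fock C V) {ffun {set V * bool} -> C^o}.

Lemma card_sep_setU1 (T : finType) (x : T) (S : {set T}) (P : pred T) :
  x \notin S -> #|[set z in x |: S | P z]| = (P x + #|[set z in S | P z]|)%N.
Proof.
move=> xS; case Px: (P x).
  have -> : [set z in x |: S | P z] = x |: [set z in S | P z].
    by apply/setP=> z; rewrite !inE; case: (eqVneq z x) => [->|]; rewrite ?Px.
  by rewrite cardsU1 inE (negbTE xS).
rewrite add0n; apply: eq_card => z; rewrite !inE.
by case: (eqVneq z x) => [->|]; rewrite ?Px ?(negbTE xS) ?andbF.
Qed.

Section FockSpace.
Variables (C : numClosedFieldType) (V : finType).
Implicit Types (x y : V * bool) (S : {set V * bool}) (psi phi : fock C V).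

Lemma fscaleE (a : C) psi : fscale a psi = a *: psi.
Proof. by apply/ffunP => S; rewrite !ffunE. Qed.

(* The Jordan-Wigner sign of x only sees the modes strictly below x. *)
Lemma jw_setU1x x S : jw C x (x |: S) = jw C x S.
Proof.
rewrite /jw; congr (_ ^+ _); apply: eq_card => y; rewrite !inE.
by case: (eqVneq y x) => [->|] //=; rewrite ltnn andbF.
Qed.

Lemma jw_setD1x x S : jw C x (S :\ x) = jw C x S.
Proof.
rewrite /jw; congr (_ ^+ _); apply: eq_card => y; rewrite !inE.
by case: (eqVneq y x) => [->|] //=; rewrite ltnn !andbF.
Qed.

Lemma jw_setU1 x y S : y \notin S ->
  jw C x (y |: S) = (-1) ^+ (enum_rank y < enum_rank x)%N * jw C x S.
Proof. by move=> yS; rewrite /jw card_sep_setU1 // exprD. Qed.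

Lemma jw_mulK x S (z : C) : jw C x S * (jw C x S * z) = z.
Proof. by rewrite mulrA -exprMn mulrNN mulr1 expr1n mul1r. Qed.

Lemma jw_conj x S : (jw C x S)^* = jw C x S.
Proof. by rewrite /jw rmorphXn rmorphN1. Qed.

Lemma jw_neq0 x S : jw C x S != 0.
Proof. by rewrite /jw expf_neq0 // oppr_eq0 oner_eq0. Qed.

Lemma cdag_is_linear x : linear (@cdag C V x).
Proof.
move=> a p q; apply/ffunP => S; rewrite !ffunE.
case: ifP => _; rewrite ?ffunE /GRing.scale /=.
  by rewrite mulrDr mulrCA.
by rewrite mulr0 addr0.
Qed.

Lemma cann_is_linear x : linear (@cann C V x).
Proof.
move=> a p q; apply/ffunP => S; rewrite !ffunE.
case: ifP => _; rewrite ?ffunE /GRing.scale /=.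
  by rewrite mulr0 addr0.
by rewrite mulrDr mulrCA.
Qed.

Lemma cann_cdag x y psi :
  cann x (cdag y psi) = (if x == y then psi else 0) - cdag y (cann x psi).
Proof.
apply/ffunP => S; rewrite !ffunE.
case: (eqVneq x y) => [<-|xy].
  case xS: (x \in S).
    by rewrite !inE eqxx /= setD1K // jw_setD1x jw_mulK subrr.
  by rewrite setU11 setU1K ?xS // jw_setU1x jw_mulK subr0.
rewrite ffunE sub0r.
case xS: (x \in S).
  by case: (y \in S); rewrite ?ffunE ?inE ?xS ?andbT ?(negbTE xy) ?mulr0 ?oppr0.
rewrite inE in_set1 eq_sym (negbTE xy) /=.
case yS: (y \in S); last by rewrite mulr0 oppr0.
rewrite !inE xS andbF.
have -> : (x |: S) :\ y = x |: (S :\ y).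
  by apply/setP => z; rewrite !inE; case: (eqVneq z x) => // ->; rewrite (negbTE xy).
rewrite (jw_setU1 _ (negbT xS)).
have -> : jw C x S = jw C x (y |: (S :\ y)) by rewrite setD1K.
rewrite (jw_setU1 _ (negbT (setD11 y S))).
have : enum_rank x != enum_rank y by rewrite (inj_eq enum_rank_inj).
by rewrite neq_ltn => /orP [] h; rewrite h ltnNge ltnW //= ?expr1 ?expr0; ring.
Qed.

Lemma numopE x psi :
  numop x psi = [ffun S : {set V * bool} => if x \in S then psi S else 0].
Proof.
apply/ffunP => S; rewrite !ffunE; case: ifP => xS //.
by rewrite !inE eqxx /= setD1K // jw_setD1x jw_mulK.
Qed.

Definition ip (p q : fock C V) : C := \sum_(S : {set V * bool}) (p S)^* * q S.

Lemma ip_addr p q r : ip p (q + r) = ip p q + ip p r.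
Proof. by rewrite /ip -big_split /=; apply: eq_bigr => S _; rewrite ffunE mulrDr. Qed.

Lemma ip_scaler p (a : C) q : ip p (a *: q) = a * ip p q.
Proof. by rewrite /ip mulr_sumr; apply: eq_bigr => S _; rewrite !ffunE mulrCA. Qed.

Lemma ip_sumr (I : Type) (r : seq I) (P : pred I) (F : I -> fock C V) p :
  ip p (\sum_(i <- r | P i) F i) = \sum_(i <- r | P i) ip p (F i).
Proof.
rewrite /ip exchange_big /=; apply: eq_bigr => S _.
by rewrite sum_ffunE mulr_sumr.
Qed.

Lemma ip_suml (I : Type) (r : seq I) (P : pred I) (F : I -> fock C V) q :
  ip (\sum_(i <- r | P i) F i) q = \sum_(i <- r | P i) ip (F i) q.
Proof.
rewrite /ip exchange_big /=; apply: eq_bigr => S _.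
by rewrite sum_ffunE rmorph_sum mulr_suml.
Qed.

Lemma ip_ge0 psi : 0 <= ip psi psi.
Proof. by rewrite /ip sumr_ge0 // => S _; rewrite mulrC mul_conjC_ge0. Qed.

Lemma ip_gt0 psi : psi != 0 -> 0 < ip psi psi.
Proof.
move=> hpsi; have [S hS] : exists S, psi S != 0.
  apply/existsP; apply: contraR hpsi => /existsPn h; apply/eqP/ffunP => S.
  by move/negbNE/eqP: (h S) => ->; rewrite ffunE.
rewrite /ip (bigD1 S) //= ltr_pwDl //; first by rewrite mulrC mul_conjC_gt0.
by rewrite sumr_ge0 // => T _; rewrite mulrC mul_conjC_ge0.
Qed.

Lemma cdag_adjoint x p q : ip p (cdag x q) = ip (cann x p) q.
Proof.
pose h S := if x \in S then S :\ x else x |: S.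
have h_invol : involutive h.
  move=> S; rewrite /h; case: (boolP (x \in S)) => xS.
    by rewrite setD11 setD1K.
  by rewrite setU11 setU1K.
rewrite /ip (reindex_inj (inv_inj h_invol)) /=; apply: eq_bigr => S _.
rewrite !ffunE /h; case: ifP => xS.
  by rewrite setD11 rmorph0 mul0r mulr0.
by rewrite setU11 setU1K ?xS // rmorphM /= jw_conj jw_setU1x mulrCA mulrA.
Qed.

End FockSpace.

HB.instance Definition _ (C : numClosedFieldType) (V : finType) (x : V * bool) :=
  GRing.isLinear.Build C (fock C V) (fock C V) *:%R (@cdag C V x) (cdag_is_linear x).
HB.instance Definition _ (C : numClosedFieldType) (V : finType) (x : V * bool) :=
  GRing.isLinear.Build C (fock C V) (fock C V) *:%R (@cann C V x) (cann_is_linear x).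

Section Hamiltonian.
Variables (C : numClosedFieldType) (V : finType) (L : nat) (Vl : 'I_L -> {set V}).
Implicit Types (psi : fock C V) (l : 'I_L) (s : bool).

Definition block_ann l s psi : fock C V := \sum_(v in Vl l) cann (v, s) psi.

Lemma block_ann_is_linear l s : linear (block_ann l s).
Proof.
move=> a p q; rewrite /block_ann scaler_sumr -big_split.
by apply: eq_bigr => v _; rewrite linearP.
Qed.

HB.instance Definition _ l s :=
  GRing.isLinear.Build C (fock C V) (fock C V) *:%R (block_ann l s)
    (block_ann_is_linear l s).

Lemma block_ann_cdag l s u psi :
  block_ann l s (cdag (u, s) psi) =
  (if u \in Vl l then psi else 0) - cdag (u, s) (block_ann l s psi).
Proof.
rewrite /block_ann raddf_sum /=.
under eq_bigr do rewrite cann_cdag.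
rewrite sumrB; congr (_ - _).
case: ifP => ul.
  rewrite (bigD1 u) //= big1 ?addr0 ?eqxx // => v /andP [_ vu].
  by rewrite xpair_eqE (negbTE vu).
by rewrite big1 // => v vl; rewrite xpair_eqE eqxx andbT; case: eqP => // vu; rewrite vu ul in vl.
Qed.

Lemma weightE v v' :
  (weight Vl v v')%:R = \sum_(l | (v \in Vl l) && (v' \in Vl l)) (1 : C).
Proof. by rewrite /weight -sum1_card natr_sum; apply: eq_bigl => l; rewrite inE. Qed.

(* Since each G_l is complete, H_hop = t sum_{l,s} B_{l,s}^dag B_{l,s}. *)
Lemma Hhop_blocks (t : C) psi :
  Hhop Vl t psi =
  \sum_l \sum_s t *: \sum_(v in Vl l) cdag (v, s) (block_ann l s psi).
Proof.
pose G l s v v' : fock C V :=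
  if (v \in Vl l) && (v' \in Vl l) then t *: cdag (v, s) (cann (v', s) psi) else 0.
have -> : Hhop Vl t psi = \sum_v \sum_v' \sum_s \sum_l G l s v v'.
  apply: eq_bigr => v _; apply: eq_bigr => v' _; apply: eq_bigr => s _.
  rewrite fscaleE weightE mulr_suml scaler_suml big_mkcond; apply: eq_bigr => l _.
  by rewrite /G; case: ifP => _; rewrite ?mul1r ?scale0r.
under eq_bigr => v _ do under eq_bigr => v' _ do rewrite exchange_big.
under eq_bigr => v _ do rewrite exchange_big.
rewrite exchange_big.
under eq_bigr => l _ do under eq_bigr => v _ do rewrite exchange_big.
under eq_bigr => l _ do rewrite exchange_big.
apply: eq_bigr => l _; apply: eq_bigr => s _.
rewrite scaler_sumr [RHS]big_mkcond; apply: eq_bigr => v _.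
rewrite /block_ann raddf_sum scaler_sumr.
case: ifP => vl; last by rewrite big1 // => v' _; rewrite /G vl.
rewrite [RHS]big_mkcond; apply: eq_bigr => v' _.
by rewrite /G vl /=; case: ifP.
Qed.

Lemma Hhop_psd (t : C) psi : 0 <= t -> 0 <= ip psi (Hhop Vl t psi).
Proof.
move=> t_ge0; rewrite Hhop_blocks ip_sumr sumr_ge0 // => l _.
rewrite ip_sumr sumr_ge0 // => s _.
rewrite ip_scaler ip_sumr mulr_ge0 //.
under eq_bigr do rewrite cdag_adjoint.
by rewrite -ip_suml ip_ge0.
Qed.

Lemma Hint_psd (U : C) psi : 0 <= U -> 0 <= ip psi (Hint U psi).
Proof.
move=> U_ge0; rewrite ip_sumr sumr_ge0 // => v _.
rewrite fscaleE ip_scaler mulr_ge0 // !numopE /ip sumr_ge0 // => S _; rewrite !ffunE.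
by case: ifP => _; first case: ifP => _; rewrite ?mulr0 // mulrC mul_conjC_ge0.
Qed.

Lemma Hubbard_eigenvalue_ge0 (t U E : C) psi :
  0 <= t -> 0 <= U -> psi != 0 -> Hubbard Vl t U psi = fscale E psi -> 0 <= E.
Proof.
move=> t_ge0 U_ge0 psi_neq0 /(congr1 (ip psi)).
rewrite fscaleE ip_scaler ip_addr => eigen.
have : 0 <= E * ip psi psi by rewrite -eigen addr_ge0 ?Hhop_psd ?Hint_psd.
by rewrite pmulr_lge0 // ip_gt0.
Qed.

End Hamiltonian.

Section DirectedGraph.
Variables (V : finType) (L : nat) (Vl : 'I_L -> {set V}) (b : 'I_L -> V).
Hypothesis hc : construction Vl b.
Local Notation e := (dedge Vl b).

Lemma black_inj : injective b.
Proof.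
case: hc => _ [_ hb _ hk _] l k blk; apply: val_inj.
case: (ltngtP (val l) (val k)) => // h.
  by have := hk k l h; rewrite -blk hb.
by have := hk l k h; rewrite blk hb.
Qed.

Lemma black_not_white l : b l \notin white b.
Proof. by rewrite inE negb_forall; apply/existsP; exists l; rewrite eqxx. Qed.

Lemma dedge_black u l : e u (b l) = (u \in Vl l) && (u != b l).
Proof.
apply/existsP/andP => [[l' /and3P [/eqP bl' ul' ub]]|[ul ub]].
  by have ll' := black_inj bl'; subst l'; rewrite ul' ub.
by exists l; rewrite eqxx ul ub.
Qed.

Lemma dedge_target_not_white x y : e x y -> y \notin white b.
Proof. by case/existsP => l /and3P [/eqP -> _ _]; apply: black_not_white. Qed.

Lemma reach_not_white w u : connect e w u -> u != w -> u \notin white b.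
Proof.
case/connectP => p hp ->; case/lastP: p hp => [|p y] //=; first by rewrite eqxx.
rewrite rcons_path last_rcons => /andP [_ h] _.
exact: dedge_target_not_white h.
Qed.

(* A potential strictly decreasing along edges: twice the depth
   max {L - l | v in V_l}, plus one for white vertices. *)
Definition depth (v : V) : nat := (\max_(l : 'I_L | v \in Vl l) (L - l))%N.
Definition potential (v : V) : nat := (2 * depth v + (v \in white b))%N.

Lemma depth_ge v l : v \in Vl l -> (L - l <= depth v)%N.
Proof. exact: (@leq_bigmax_cond _ (fun k => v \in Vl k) (fun k : 'I_L => L - k)%N). Qed.

Lemma potential_dedge x y : e x y -> (potential y < potential x)%N.
Proof.
have [_ [_ hb _ hk _]] := hc.
case/existsP => l /and3P [/eqP -> xl xb].
have depth_b : (depth (b l) <= L - l)%N.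
  apply/bigmax_leqP => k bk; have: ~~ (k < l)%N.
    by apply/negP => kl; have := hk l k kl; rewrite bk.
  rewrite -leqNgt => lk; lia.
have depth_x := depth_ge xl.
rewrite /potential (negbTE (black_not_white l)).
case xw: (x \in white b); first by lia.
move: xw; rewrite inE => /negbT; rewrite negb_forall => /existsP [j].
rewrite negbK => /eqP xj.
have jl : (j < l)%N.
  have h1 : ~~ (l < j)%N by apply/negP => lj; have := hk j l lj; rewrite -xj xl.
  have h2 : nat_of_ord j != nat_of_ord l.
    by apply/negP => /eqP /val_inj jl; move: xb; rewrite xj jl eqxx.
  lia.
have depth_x' : (L - j <= depth x)%N by apply: depth_ge; rewrite xj hb.
have := ltn_ord l; lia.
Qed.

Lemma path_potential_last p v : path e v p -> p != [::] ->
  (potential (last v p) < potential v)%N.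
Proof.
elim: p v => //= y p IH v /andP [evy py] _.
have hy := potential_dedge evy.
by case: p IH py => [|z p] IH py //=; apply: ltn_trans (IH y py isT) hy.
Qed.

Lemma path_size_lt v p : path e v p -> (size p < #|V|)%N.
Proof.
move=> hp.
have hp2 : path (fun a c => c < a)%N (potential v) (map potential p).
  by rewrite path_map; apply: sub_path hp => x y /= h; exact: potential_dedge h.
have hu : uniq (potential v :: map potential p).
  apply: (@sorted_uniq _ (fun a c => c < a)%N) => //.
    by move=> x y z /= h1 h2; apply: ltn_trans h1.
  by move=> x /=; rewrite ltnn.
have hu2 : uniq (v :: p) by apply: (map_uniq (f := potential)).
by have := max_card (mem (v :: p)); rewrite (card_uniqP hu2).
Qed.

Lemma npaths_long k v u : (#|V| <= k)%N -> npaths Vl b k v u = 0%N.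
Proof.
move=> hk; apply/eqP; rewrite cards_eq0; apply/eqP/setP => p.
rewrite !inE; apply/negbTE/negP => /andP [hp _].
by have := path_size_lt hp; rewrite size_tuple; lia.
Qed.

Lemma npaths0 v u : npaths Vl b 0 v u = (v == u).
Proof.
rewrite /npaths; case: eqP => [<-|nvu].
  have -> : [set p : 0.-tuple V | path e v p && (last v p == v)] = setT.
    by apply/setP => p; rewrite !inE (tuple0 p) /= eqxx.
  by rewrite cardsT card_tuple.
apply/eqP; rewrite cards_eq0; apply/eqP/setP => p.
by rewrite !inE (tuple0 p) /=; apply/negbTE/eqP.
Qed.

Lemma npaths_cycle k w : (0 < k)%N -> npaths Vl b k w w = 0%N.
Proof.
move=> hk; apply/eqP; rewrite cards_eq0; apply/eqP/setP => p.
rewrite !inE; apply/negbTE/negP => /andP [hp /eqP hl].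
have hne : (p : seq V) != [::] by rewrite -size_eq0 size_tuple -lt0n.
by have := path_potential_last hp hne; rewrite hl ltnn.
Qed.

Lemma npaths_unreach k v u : ~~ connect e v u -> npaths Vl b k v u = 0%N.
Proof.
move=> hn; apply/eqP; rewrite cards_eq0; apply/eqP/setP => p.
rewrite !inE; apply/negbTE/negP => /andP [hp /eqP hl].
by move/negP: hn; apply; apply/connectP; exists p.
Qed.

(* Paths with k+1 edges ending at z split according to their last edge u -> z. *)
Lemma npathsS k v z :
  npaths Vl b k.+1 v z = (\sum_(u | e u z) npaths Vl b k v u)%N.
Proof.
pose B := [set q : k.-tuple V | path e v q && e (last v q) z].
pose f := fun q : k.-tuple V => [tuple of rcons q z].
have f_inj : injective f.
  by move=> q1 q2 h; apply: val_inj; apply: (@rcons_injl _ z); exact: (congr1 val h).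
have -> : npaths Vl b k.+1 v z = #|B|.
  rewrite /npaths -(card_imset _ f_inj); apply: eq_card => p; rewrite !inE.
  apply/idP/imsetP => [/andP [hp /eqP hl]|[q]].
    exists [tuple of behead (belast v p)].
      rewrite inE; case: p hp hl => [[|x s] /= sz] //.
      by move=> hp hl; rewrite -hl -rcons_path -lastI.
    apply: val_inj => /=; case: p hp hl => [[|x s] /= sz] //.
    by move=> _ <-; rewrite -lastI.
  by rewrite inE => hq -> /=; rewrite rcons_path last_rcons eqxx andbT.
rewrite -sum1_card (partition_big (fun q : k.-tuple V => last v q) (fun u => e u z)).
  apply: eq_bigr => u euz; rewrite /npaths -sum1_card; apply: eq_bigl => q.
  rewrite !inE; apply/andP/andP => [[/andP [h1 _] h2] | [h1 h2]] //.
  by rewrite h1 (eqP h2) euz.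
by move=> q; rewrite inE => /andP [].
Qed.

Section Coefficients.
Variable C : numClosedFieldType.
Local Notation a := (acoef C Vl b).

Lemma acoef_refl w : a w w = 1.
Proof.
have hV : (0 < #|V|)%N by apply/card_gt0P; exists w.
rewrite /acoef (bigD1 (Ordinal hV)) //= big1 ?addr0.
  by rewrite npaths0 eqxx expr0 mul1r.
move=> k hk; rewrite npaths_cycle ?mulr0 //.
by rewrite lt0n; apply: contra hk => /eqP h; apply/eqP/val_inj.
Qed.

Lemma acoef_unreach v u : ~~ connect e v u -> a v u = 0.
Proof. by move=> hn; rewrite /acoef big1 // => k _; rewrite npaths_unreach // mulr0. Qed.

Lemma acoef_rec v z : v != z -> a v z = - \sum_(u | e u z) a v u.
Proof.
move=> vz; rewrite /acoef; set n := #|V|.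
pose g k : C := (-1) ^+ k * (npaths Vl b k v z)%:R.
have recl : \sum_(k < n.+1) g k = g 0%N + \sum_(k < n) g k.+1 by rewrite big_ord_recl.
have recr : \sum_(k < n.+1) g k = \sum_(k < n) g k + g n by rewrite big_ord_recr.
have g0 : g 0%N = 0 by rewrite /g npaths0 (negbTE vz) mulr0.
have gn : g n = 0 by rewrite /g npaths_long ?mulr0.
have -> : \sum_(k < n) g k = \sum_(k < n) g k.+1.
  by apply: (addIr (g n)); rewrite -recr recl g0 gn add0r addr0.
rewrite exchange_big /= -sumrN; apply: eq_bigr => k _.
rewrite /g npathsS natr_sum mulr_sumr exprS mulN1r -sumrN.
by apply: eq_bigr => u _; rewrite mulNr.
Qed.

(* The key cancellation: for white w the coefficients of a^dag_w sum to zero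
   on every block V_l (split off v_l^0 and use the recursion there). *)
Lemma acoef_block_sum w l : w \in white b -> \sum_(u in Vl l) a w u = 0.
Proof.
move=> hw; have [_ [_ hb _ _ _]] := hc.
have wb : w != b l by apply: contraTneq hw => ->; apply: black_not_white.
rewrite (bigD1 (b l)) //= acoef_rec // addrC; apply/eqP; rewrite subr_eq0.
by apply/eqP; apply: eq_bigl => u; rewrite dedge_black.
Qed.

End Coefficients.

End DirectedGraph.

Section Ferromagnet.
Variables (C : numClosedFieldType) (V : finType) (L : nat).
Variables (Vl : 'I_L -> {set V}) (b : 'I_L -> V).
Implicit Types (psi : fock C V) (l : 'I_L) (s : seq V).

Local Notation adags s := (foldr (fun v psi => adag_up Vl b v psi) (vacuum C V) s).

Lemma block_ann_vacuum l sg : block_ann Vl l sg (vacuum C V) = 0.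
Proof.
rewrite /block_ann big1 // => v _; apply/ffunP => S; rewrite !ffunE.
case: ifP => // _; case: eqP => [h|]; last by rewrite mulr0.
by have := setU11 (v, sg) S; rewrite h inE.
Qed.

(* From {B_{l,up}, c^dag_{u,up}} = [u in V_l]: if B_{l,up} psi = 0 then
   B_{l,up} a^dag_w psi = (sum of a(w,u) over u in R(w) and V_l) psi. *)
Lemma block_ann_adag_up l w psi :
  block_ann Vl l true psi = 0 ->
  block_ann Vl l true (adag_up Vl b w psi) =
  (\sum_(u | connect (dedge Vl b) w u && (u \in Vl l)) acoef C Vl b w u) *: psi.
Proof.
move=> hB; rewrite /adag_up raddf_sum scaler_suml big_mkcondr /=.
apply: eq_bigr => u _; rewrite fscaleE linearZ /= block_ann_cdag hB raddf0 subr0.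
by case: ifP => _; rewrite ?scaler0.
Qed.

Hypothesis hc : construction Vl b.

Lemma block_ann_up_adags l s :
  all (mem (white b)) s -> block_ann Vl l true (adags s) = 0.
Proof.
elim: s => [|w s IH] /=; first by rewrite block_ann_vacuum.
case/andP => hw hs; rewrite block_ann_adag_up ?IH //.
have -> : \sum_(u | connect (dedge Vl b) w u && (u \in Vl l)) acoef C Vl b w u =
          \sum_(u in Vl l) acoef C Vl b w u.
  rewrite big_mkcond [RHS]big_mkcond; apply: eq_bigr => u _.
  case: (boolP (connect _ w u)) => //= hn; case: ifP => // _.
  by rewrite acoef_unreach.
by rewrite acoef_block_sum // scale0r.
Qed.

Definition up_polarized (n : nat) psi :=
  forall S : {set V * bool}, psi S != 0 -> (#|S| == n) && [forall x in S, x.2].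

Lemma up_polarized_adags s : up_polarized (size s) (adags s).
Proof.
elim: s => [|w s IH] S /=.
  rewrite ffunE; case: (eqVneq S set0) => [-> _|]; last by rewrite eqxx.
  by rewrite cards0 eqxx; apply/forallP => x; rewrite inE.
apply: contraR => hn; rewrite /adag_up sum_ffunE big1 // => u _; rewrite !ffunE.
case: ifP => uS; last by rewrite !mulr0.
case: (eqVneq (adags s (S :\ (u, true))) 0) => [->|h]; first by rewrite !mulr0.
move/andP: (IH _ h) => [/eqP c /forallP f].
case/negP: hn; apply/andP; split; first by rewrite (cardsD1 (u, true) S) uS c.
apply/forallP => x; apply/implyP => xS.
case: (eqVneq x (u, true)) => [->//|xu].
by have := f x; rewrite !inE xu xS.
Qed.

Lemma cann_down_polarized n psi v : up_polarized n psi -> cann (v, false) psi = 0.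
Proof.
move=> hp; apply/ffunP => S; rewrite !ffunE; case: ifP => // _.
case: (eqVneq (psi ((v, false) |: S)) 0) => [->|h]; first by rewrite mulr0.
move/andP: (hp _ h) => [_ /forallP f].
by have := f (v, false); rewrite setU11.
Qed.

Definition up_modes s : {set V * bool} := [set x | x.2 && (x.1 \in s)].

(* Each white w occurs in a^dag_w with coefficient a(w,w) = 1 and in no other
   a^dag_{w'} (w' white), so the coefficient on up_modes s is a nonzero sign. *)
Lemma adags_up_modes_neq0 s :
  uniq s -> all (mem (white b)) s -> adags s (up_modes s) != 0.
Proof.
elim: s => [|w s IH] /=.
  move=> _ _; have -> : up_modes [::] = set0 by apply/setP => x; rewrite !inE andbF.
  by rewrite ffunE eqxx oner_eq0.
case/andP => ws us /andP [hw hs].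
rewrite /adag_up sum_ffunE (bigD1 w) ?connect0 //= big1 ?addr0.
  rewrite !ffunE acoef_refl // mul1r inE /= mem_head.
  have -> : up_modes (w :: s) :\ (w, true) = up_modes s.
    apply/setP => [[x sg]]; rewrite !inE /= xpair_eqE.
    by case: (eqVneq x w) => [->|] //=; rewrite (negbTE ws); case: sg.
  by rewrite mulf_neq0 ?jw_neq0 ?IH.
move=> u /andP [hu uw]; rewrite !ffunE inE /= in_cons (negbTE uw) /=.
case: ifP => us'; last by rewrite mulr0.
have u_white : u \in white b := allP hs u us'.
by have := reach_not_white hu uw; rewrite u_white.
Qed.

(* There are exactly L black vertices. *)
Lemma card_white : #|white b| = (#|V| - L)%N.
Proof.
have -> : white b = ~: [set b l | l : 'I_L].
  apply/setP => v; rewrite inE in_setC; apply/forallP/negP => [h /imsetP [l _ e]|h l].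
    by move: (h l); rewrite e eqxx.
  by apply/eqP => e; apply: h; apply/imsetP; exists l.
have := cardsC [set b l | l : 'I_L]; rewrite card_imset; last exact: black_inj hc.
rewrite card_ord; lia.
Qed.

End Ferromagnet.

Unset Implicit Arguments.

Theorem proposition2 (C : numClosedFieldType) (V : finType) (L : nat)
    (Vl : 'I_L -> {set V}) (b : 'I_L -> V) (t U : C) :
  construction Vl b -> 0 < t -> 0 < U ->
  let Ne := (#|V| - L)%N in
  let Phi := Phi_up C Vl b in
  [/\ Phi != 0,
      n_electron Ne Phi,
      Hubbard Vl t U Phi = 0
    & forall (E : C) (psi : fock C V),
        n_electron Ne psi -> psi != 0 ->
        Hubbard Vl t U psi = fscale E psi -> 0 <= E].
Proof.
move=> hc t_gt0 U_gt0 Ne Phi.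
have white_all : all (mem (white b)) (enum (white b)).
  by apply/allP => x; rewrite mem_enum.
have polarized : up_polarized Ne Phi.
  by rewrite /Ne -(card_white hc) cardE; exact: up_polarized_adags.
have down0 v : cann (v, false) Phi = 0 := cann_down_polarized v polarized.
split.
- apply/eqP => Phi0.
  have := adags_up_modes_neq0 C hc (enum_uniq (mem (white b))) white_all.
  by rewrite -/(Phi_up C Vl b) -/Phi Phi0 ffunE eqxx.
- move=> S hS; apply/eqP; apply: contraR hS => /polarized /andP [-> _] //.
- have Hint0 : Hint U Phi = 0.
    by rewrite /Hint big1 // => v _; rewrite /numop down0 !raddf0 fscaleE scaler0.
  rewrite /Hubbard Hint0 addr0 Hhop_blocks big1 // => l _; rewrite big1 // => s _.
  have -> : block_ann Vl l s Phi = 0.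
    case: s; first exact: block_ann_up_adags.
    by rewrite /block_ann big1.
  by rewrite big1 ?scaler0 // => v _; rewrite raddf0.
- move=> E psi _; apply: Hubbard_eigenvalue_ge0; exact: ltW.
Qed.
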